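(* A general ring $I$ is strongly $\pi$-regular if and only if $I$ is quasipolar and $QN(I)\subseteq\mathrm{Nil}(I)$.
   Context: A general ring is an associative ring not necessarily having an identity; $\mathrm{Nil}(I)$ is the set of nilpotent elements of $I$. For $p,q\in I$, $p*q=p+q-pq$; $Q(I)=\{q\in I\mid p*q=0=q*p \text{ for some } p\in I\}$; $\mathrm{comm}(a)=\{x\in I\mid xa=ax\}$, $\mathrm{comm}^2(a)=\{x\in I\mid xy=yx\text{ for all }y\in\mathrm{comm}(a)\}$; $QN(I)=\{q\in I\mid qx\in Q(I)\text{ for every }x\in\mathrm{comm}(q)\}$. An element $a\in I$ is quasipolar in $I$ if there is an idempotent $p=p^2\in\mathrm{comm}^2(a)$ with $a+p\in Q(I)$ and $a-ap\in QN(I)$; $I$ is quasipolar if every element is. An element $a$ is strongly $\pi$-regular if there exist $n\in\mathbb{N}$ and $x\in I$ with $xa=ax$ and $a^n=a^{n+1}x$; $I$ is strongly $\pi$-regular if every element is. *)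

(* A "general ring" (associative, not necessarily unital) is
   modelled as an additive abelian group (zmodType) with an associative,
   bi-additive multiplication.  MathComp's ring hierarchy always has a 1, so we
   package the non-unital structure ourselves. *)
From HB Require Import structures.
From mathcomp Require Import all_boot all_order all_algebra.
Set Implicit Arguments. Unset Strict Implicit. Unset Printing Implicit Defensive.
Import GRing.Theory.
Local Open Scope ring_scope.

Record genRing := GenRing {
  gr_car :> zmodType;
  gr_mul : gr_car -> gr_car -> gr_car;
  gr_mulA : forall x y z, gr_mul x (gr_mul y z) = gr_mul (gr_mul x y) z;
  gr_mulDl : forall x y z, gr_mul (x + y) z = gr_mul x z + gr_mul y z;
  gr_mulDr : forall x y z, gr_mul x (y + z) = gr_mul x y + gr_mul x z
}.

Section GenRingDefs.
Variable I : genRing.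
Local Notation "x ** y" := (gr_mul x y) (at level 40, left associativity).

(* gpow a n = a^(n+1)  (positive powers only: there is no identity) *)
Definition gpow (a : I) (n : nat) : I := iter n (fun y => a ** y) a.

Definition gnilpotent (a : I) : Prop := exists n, gpow a n = 0.

Definition gcirc (p q : I) : I := p + q - p ** q.

Definition inQ (q : I) : Prop := exists p : I, gcirc p q = 0 /\ gcirc q p = 0.

Definition incomm (a x : I) : Prop := x ** a = a ** x.

Definition incomm2 (a x : I) : Prop := forall y, incomm a y -> x ** y = y ** x.

Definition inQN (q : I) : Prop := forall x, incomm q x -> inQ (q ** x).

Definition quasipolar_elt (a : I) : Prop :=
  exists p : I, p ** p = p /\ incomm2 a p /\ inQ (a + p) /\ inQN (a - a ** p).

Definition quasipolar_ring : Prop := forall a : I, quasipolar_elt a.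

(* a strongly pi-regular: exist n >= 1 and x with xa = ax and a^n = a^(n+1) x.
   Here gpow a n = a^(n+1), so n ranges over naturals >= 1 via the shift. *)
Definition spr_elt (a : I) : Prop :=
  exists (n : nat) (x : I), x ** a = a ** x /\ gpow a n = gpow a n.+1 ** x.

Definition spr_ring : Prop := forall a : I, spr_elt a.

End GenRingDefs.

From mathcomp Require Import all_boot all_order all_algebra.
Set Implicit Arguments. Unset Strict Implicit. Unset Printing Implicit Defensive.
Import GRing.Theory.

(* (=>) If a^(n+1) = a^(n+2) x with xa = ax, put e = a^(n+1) x^(n+1).  Then e
   is an idempotent in comm^2(a), the "nilpotent part" a - ae satisfies
   (a - ae)^(n+1) = 0, and the "unit part" ae + e is quasi-invertible (with
   quasi-inverse e + xe).  Since (ae + e)(a - ae) = 0, a + e is the circle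
   product of these two quasi-invertible elements, hence lies in Q(I); and a
   nilpotent element lies in QN(I) because its products with commuting
   elements are nilpotent, and nilpotents are quasi-invertible (geometric
   series).  Conversely, if q in QN(I) and q^(n+1) = q^(n+2) x, the relation
   qx o r = 0 multiplied by q^(n+1) kills q^(n+1).

   (<=) If p is the idempotent of a and q the quasi-inverse of a + p, then q
   commutes with a and p, and x = qp - p satisfies ax = p; as a - ap is in
   QN(I), hence nilpotent, a^(m+1) = a^(m+1) p = a^(m+2) x. *)

Section GeneralRing.
Local Open Scope ring_scope.
Variable I : genRing.
Local Notation "x ** y" := (gr_mul x y) (at level 40, left associativity).
Implicit Types a e p q r s t u w x y z : I.

Lemma mul0g x : (0 : I) ** x = 0.
Proof. by apply: (@addrI _ (0 ** x)); rewrite -gr_mulDl !addr0. Qed.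

Lemma mulg0 x : x ** (0 : I) = 0.
Proof. by apply: (@addrI _ (x ** 0)); rewrite -gr_mulDr !addr0. Qed.

Lemma mulNg x y : (- x) ** y = - (x ** y).
Proof. by apply: (@addrI _ (x ** y)); rewrite -gr_mulDl !subrr mul0g. Qed.

Lemma mulgN x y : x ** (- y) = - (x ** y).
Proof. by apply: (@addrI _ (x ** y)); rewrite -gr_mulDr !subrr mulg0. Qed.

Lemma mulBg x y z : (x - y) ** z = x ** z - y ** z.
Proof. by rewrite gr_mulDl mulNg. Qed.

Lemma mulgB x y z : z ** (x - y) = z ** x - z ** y.
Proof. by rewrite gr_mulDr mulgN. Qed.

Lemma circA x y z : gcirc (gcirc x y) z = gcirc x (gcirc y z).
Proof.
rewrite /gcirc !(mulBg, mulgB, gr_mulDl, gr_mulDr) !gr_mulA !opprD !opprK !addrA.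
move: (x ** y) (y ** z) (x ** z) (x ** y ** z) => A B C D.
by rewrite [LHS](ACl (1*2*4*6*3*5*7))%AC.
Qed.

Lemma circ0l x : gcirc 0 x = x.
Proof. by rewrite /gcirc mul0g add0r subr0. Qed.

Lemma inQ_circ s t : inQ s -> inQ t -> inQ (gcirc s t).
Proof.
move=> [r [rs sr]] [r' [r't tr']]; exists (gcirc r' r); split.
  by rewrite circA -(circA r s t) rs circ0l r't.
by rewrite circA -(circA t r' r) tr' circ0l sr.
Qed.

Lemma circ_orth s t : s ** t = 0 -> gcirc s t = s + t.
Proof. by move=> st; rewrite /gcirc st subr0. Qed.

Lemma quasi_inverse_comm z q s : z ** s = s ** z ->
  gcirc q s = 0 -> gcirc s q = 0 -> z ** q = q ** z.
Proof.
move=> zs qs sq.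
have qsE : q ** s = q + s by rewrite (subr0_eq qs).
have sqE : s ** q = s + q by rewrite (subr0_eq sq).
have qzs : q ** (z ** s) = q ** z + s ** z by rewrite zs gr_mulA qsE gr_mulDl.
have szq : s ** z ** q = q ** z + s ** z.
  have E1 : q ** z ** s ** q = q ** z ** q + s ** z ** q.
    by rewrite -(gr_mulA q z s) qzs gr_mulDl.
  have E2 : q ** z ** s ** q = q ** z + s ** z + q ** z ** q.
    by rewrite -gr_mulA sqE gr_mulDr -(gr_mulA q z s) qzs.
  by apply: (@addrI _ (q ** z ** q)); rewrite -E1 E2 addrC.
have szq' : s ** z ** q = s ** z + z ** q.
  by rewrite -zs -gr_mulA sqE gr_mulDr zs.
by apply: (@addrI _ (s ** z)); rewrite -szq' szq addrC.
Qed.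

Lemma gpowS a k : gpow a k.+1 = a ** gpow a k.
Proof. by []. Qed.

Lemma gpow_comm a y k : y ** a = a ** y -> y ** gpow a k = gpow a k ** y.
Proof.
move=> ya; elim: k => [|k IH] //=.
by rewrite gr_mulA ya -gr_mulA IH gr_mulA.
Qed.

Lemma gpow_self_comm a k : a ** gpow a k = gpow a k ** a.
Proof. exact: gpow_comm. Qed.

Lemma gpow_mul a x k : x ** a = a ** x -> gpow (a ** x) k = gpow a k ** gpow x k.
Proof.
move=> xa; elim: k => [|k IH] //.
rewrite gpowS IH !gpowS -gr_mulA (gr_mulA x) (gpow_comm _ xa) -gr_mulA.
by rewrite gr_mulA.
Qed.

Lemma gpow_fix u t k : u ** t = u -> u ** gpow t k = u.
Proof. by move=> ut; elim: k => [|k IH] //; rewrite gpowS gr_mulA ut. Qed.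

Lemma gpow_sub_idem a e k : e ** e = e -> e ** a = a ** e ->
  gpow (a - a ** e) k = gpow a k - gpow a k ** e.
Proof.
move=> ee ea; elim: k => [|k IH] //.
rewrite gpowS IH gpowS mulBg !mulgB.
have eak : e ** gpow a k = gpow a k ** e by apply: gpow_comm.
rewrite -!(gr_mulA a e) eak (gr_mulA e) eak -(gr_mulA _ e e) ee subrr subr0.
by rewrite gr_mulA.
Qed.

Fixpoint geo t k : I := if k is k'.+1 then t + t ** geo t k' else 0.

Lemma geo_comm t k : geo t k ** t = t ** geo t k.
Proof.
elim: k => [|k IH] /=; first by rewrite mul0g mulg0.
by rewrite gr_mulDl gr_mulDr -gr_mulA IH.
Qed.

Lemma geo_diff t k : geo t k.+1 - geo t k = gpow t k.
Proof.
elim: k => [|k IH]; first by rewrite /= mulg0 addr0 subr0.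
have e1 : geo t k.+2 = t + t ** geo t k.+1 by [].
have e2 : geo t k.+1 = t + t ** geo t k by [].
by rewrite gpowS -IH mulgB e1 {2}e2 opprD addrACA subrr add0r.
Qed.

(* Nilpotent elements are quasi-invertible: if t^(m+1) = 0 then the series
   -(t + ... + t^m) is a two-sided quasi-inverse of t. *)
Lemma nil_Q t : gnilpotent t -> inQ t.
Proof.
move=> [m tm0].
have geoS : geo t m.+1 = geo t m by apply/eqP; rewrite -subr_eq0 geo_diff tm0.
have tgeo : t ** geo t m = geo t m - t by rewrite -[in RHS]geoS /= addrAC subrr add0r.
exists (- geo t m); rewrite /gcirc mulNg mulgN opprK geo_comm tgeo; split.
  by rewrite (addrC (- _) t) -(opprB t (geo t m)) subrr.
by rewrite -(opprB t (geo t m)) opprK subrr.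
Qed.

(* Nil(I) is contained in QN(I): products of a nilpotent with elements of its
   commutant are nilpotent, hence quasi-invertible. *)
Lemma nil_QN t : gnilpotent t -> inQN t.
Proof.
move=> [m tm0] y yt; apply: nil_Q; exists m.
by rewrite gpow_mul // tm0 mul0g.
Qed.

(* Strongly pi-regular elements of QN(I) are nilpotent: from
   q^(n+1) = q^(n+2) x and qx o r = 0 we get q^(n+1) = q^(n+1)(qx o r) = 0. *)
Lemma spr_QN_nil q : spr_elt q -> inQN q -> gnilpotent q.
Proof.
move=> [n [x [xq qn]]] qQN; have [r [_ qxr]] := qQN x xq.
have fix_qx : gpow q n ** (q ** x) = gpow q n.
  by rewrite gr_mulA -gpow_self_comm -gpowS -qn.
exists n; have : gpow q n ** gcirc (q ** x) r = 0 by rewrite qxr mulg0.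
by rewrite /gcirc mulgB gr_mulDr (gr_mulA _ (q ** x) r) fix_qx addrK.
Qed.

Section SprIdempotent.
Variables (a x : I) (n : nat).
Hypotheses (xa : x ** a = a ** x) (spr : gpow a n = gpow a n.+1 ** x).
Let u := gpow a n.
Let w := gpow x n.
Let e := u ** w.

Lemma spr_pow_comm : w ** u = u ** w.
Proof. by apply: gpow_comm; rewrite (gpow_comm n (esym xa)). Qed.

Lemma spr_absorb_r : u ** e = u.
Proof.
have uax : u ** (a ** x) = u by rewrite gr_mulA -gpow_self_comm -gpowS -spr.
by rewrite /e /u /w -(gpow_mul n xa) gpow_fix.
Qed.

Lemma spr_absorb_l : e ** u = u.
Proof. by rewrite /e -gr_mulA spr_pow_comm spr_absorb_r. Qed.

Lemma spr_idem : e ** e = e.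
Proof. by rewrite {2}/e gr_mulA spr_absorb_l. Qed.

(* e lies in comm^2(a): for y commuting with a, both ey and ye equal eye. *)
Lemma spr_idem_comm2 : incomm2 a e.
Proof.
move=> y ya.
have yu : y ** u = u ** y := gpow_comm n ya.
have wu := spr_pow_comm.
have eye_r : e ** (y ** e) = y ** e.
  have ye : y ** e = u ** (y ** w) by rewrite /e gr_mulA yu -gr_mulA.
  by rewrite ye gr_mulA spr_absorb_l.
have eye_l : e ** y ** e = e ** y.
  have ey : e ** y = w ** (y ** u) by rewrite /e -wu -gr_mulA yu.
  by rewrite ey -gr_mulA -(gr_mulA y u) spr_absorb_r.
by rewrite -eye_l -gr_mulA eye_r.
Qed.

Lemma spr_idem_comm : e ** a = a ** e.
Proof. exact: spr_idem_comm2. Qed.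

Lemma spr_corner : e ** (a ** e) = a ** e.
Proof. by rewrite gr_mulA spr_idem_comm -gr_mulA spr_idem. Qed.

(* The nilpotent part: (a - ae)^(n+1) = a^(n+1) - a^(n+1) e = 0. *)
Lemma spr_nil_part : gnilpotent (a - a ** e).
Proof.
exists n; rewrite gpow_sub_idem ?spr_idem ?spr_idem_comm //.
by rewrite -/u spr_absorb_r subrr.
Qed.

(* The unit part ae + e has quasi-inverse e + xe, since (xe)(ae) = e. *)
Lemma spr_unit_part : inQ (a ** e + e).
Proof.
have ee := spr_idem.
have ex : e ** x = x ** e by apply: spr_idem_comm2.
have axe : a ** x ** e = e.
  by rewrite /e /u gr_mulA -(gr_mulA a x) (gpow_comm n xa) gr_mulA -spr.
have eae := spr_corner.
exists (e + x ** e); rewrite /gcirc; split.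
  rewrite gr_mulDl !gr_mulDr eae ee -(gr_mulA x e) eae (gr_mulA x a e) xa axe.
  by rewrite -(gr_mulA x e e) ee (addrC (e + x ** e)) subrr.
rewrite gr_mulDl !gr_mulDr -(gr_mulA a e e) ee -(gr_mulA a e (x ** e)).
by rewrite (gr_mulA e x e) ex -(gr_mulA x e e) ee (gr_mulA a x e) axe subrr.
Qed.

(* a + e = (ae + e) o (a - ae) since the ordinary product vanishes. *)
Lemma spr_sum_Q : inQ (a + e).
Proof.
have orth : (a ** e + e) ** (a - a ** e) = 0.
  by rewrite mulgB !gr_mulDl -!(gr_mulA a e) spr_idem_comm spr_corner subrr.
have -> : a + e = gcirc (a ** e + e) (a - a ** e).
  by rewrite circ_orth // [RHS]addrC addrA subrK.
by apply: inQ_circ; [exact: spr_unit_part | exact/nil_Q/spr_nil_part].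
Qed.

End SprIdempotent.

Lemma spr_quasipolar a : spr_elt a -> quasipolar_elt a.
Proof.
move=> [n [x [xa spr]]]; exists (gpow a n ** gpow x n).
split; first exact: spr_idem.
split; first exact: spr_idem_comm2.
split; first exact: spr_sum_Q.
exact/nil_QN/spr_nil_part.
Qed.

Lemma quasipolar_witness a p q : p ** p = p -> p ** a = a ** p ->
  q ** p = p ** q -> gcirc (a + p) q = 0 -> a ** (q ** p - p) = p.
Proof.
move=> pp pa qp apq.
have key : a ** (q ** p) = a ** p + p.
  have : gcirc (a + p) q ** p = 0 by rewrite apq mul0g.
  rewrite /gcirc mulBg gr_mulDl -gr_mulA gr_mulDl pp.
  rewrite (gr_mulDl a p (q ** p)) (gr_mulA p q p) -qp -(gr_mulA q p p) pp.
  by move/eqP; rewrite subr_eq0 => /eqP /addIr ->.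
by rewrite mulgB key addrAC subrr add0r.
Qed.

(* When QN(I) consists of nilpotents, a quasipolar element is strongly
   pi-regular with witness qp - p: the nilpotency of a - ap gives
   a^(m+1) = a^(m+1) p = a^(m+2) (qp - p). *)
Lemma quasipolar_spr a : quasipolar_elt a ->
  (forall q, inQN q -> gnilpotent q) -> spr_elt a.
Proof.
move=> [p [pp [pcomm2 [[q [qap apq]] apQN]]]] QN_nil.
have pa : p ** a = a ** p by apply: pcomm2.
have a_ap : a ** (a + p) = (a + p) ** a by rewrite gr_mulDl gr_mulDr pa.
have p_ap : p ** (a + p) = (a + p) ** p by rewrite gr_mulDl gr_mulDr pa.
have aq : a ** q = q ** a := quasi_inverse_comm a_ap qap apq.
have pq : p ** q = q ** p := quasi_inverse_comm p_ap qap apq.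
have ax := quasipolar_witness pp pa (esym pq) apq.
have [m am] := QN_nil _ apQN.
exists m, (q ** p - p); split.
  rewrite ax mulBg -gr_mulA pa gr_mulA -aq -gr_mulA.
  by rewrite -mulgB ax.
rewrite gpowS (gpow_self_comm a m) -gr_mulA ax.
by move: am; rewrite gpow_sub_idem // => /eqP; rewrite subr_eq0 => /eqP.
Qed.

End GeneralRing.

Theorem proposition2p21 (I : genRing) :
  spr_ring I <-> (quasipolar_ring I /\ (forall q : I, inQN q -> gnilpotent q)).
Proof.
split=> [spr | [qp QN_nil] a].
- split=> [a | q]; first exact: spr_quasipolar (spr a).
  exact: spr_QN_nil (spr q).
- exact: quasipolar_spr (qp a) QN_nil.
Qed.
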